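(* The functions $(x,t)\mapsto F(x,t)$ and $(x,t)\mapsto G(x,t)$ are locally Lipschitz continuous on $[0,\infty)\times[0,\infty)$.
   Context: Standing assumptions: $u_0,u_b:[0,\infty)\to\mathbb{R}$ bounded measurable with $u_b>0$; $\rho_0,\rho_b:[0,\infty)\to(0,\infty)$ positive locally bounded measurable. For $x,t,y,\tau\ge0$: $F(y,x,t)=\int_0^y[tu_0(\eta)+\eta-x]\rho_0(\eta)\,d\eta$, $G(\tau,x,t)=\int_0^\tau[x-u_b(\eta)(t-\eta)]\rho_b(\eta)u_b(\eta)\,d\eta$, and $F(x,t)=\min_{y\ge0}F(y,x,t)$, $G(x,t)=\min_{\tau\ge0}G(\tau,x,t)$ (the minima are attained). *)

From HB Require Import structures.
From mathcomp Require Import all_boot all_order all_algebra.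
From mathcomp Require Import all_classical all_reals all_analysis.
Set Implicit Arguments. Unset Strict Implicit. Unset Printing Implicit Defensive.
Import Order.TTheory GRing.Theory Num.Theory.
Local Open Scope classical_set_scope.
Local Open Scope ring_scope.

Definition int0 (R : realType) (a : R) (f : R -> R) : R :=
  Rintegral (@lebesgue_measure R) `[0, a] f.

Definition Fyxt (R : realType) (u0 rho0 : R -> R) (y x t : R) : R :=
  int0 y (fun eta => (t * u0 eta + eta - x) * rho0 eta).

Definition Gtxt (R : realType) (ub rhob : R -> R) (tau x t : R) : R :=
  int0 tau (fun eta => (x - ub eta * (t - eta)) * rhob eta * ub eta).

(* F(x,t) = min_{y >= 0} F(y,x,t), G(x,t) = min_{tau >= 0} G(tau,x,t);
   the minima are attained, so they coincide with the infima. *)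
Definition Fxt (R : realType) (u0 rho0 : R -> R) (x t : R) : R :=
  inf [set Fyxt u0 rho0 y x t | y in `[0, +oo[].

Definition Gxt (R : realType) (ub rhob : R -> R) (x t : R) : R :=
  inf [set Gtxt ub rhob tau x t | tau in `[0, +oo[].

Definition locally_lipschitz_quadrant (R : realType) (f : R -> R -> R) : Prop :=
  forall x0 t0 : R, 0 <= x0 -> 0 <= t0 ->
  exists r : R, 0 < r /\ exists L : R, 0 <= L /\
    forall x t x' t' : R,
      0 <= x -> 0 <= t -> 0 <= x' -> 0 <= t' ->
      `|x - x0| < r -> `|t - t0| < r -> `|x' - x0| < r -> `|t' - t0| < r ->
      `|f x t - f x' t'| <= L * (`|x - x'| + `|t - t'|).

Definition bounded_on_nonneg (R : realType) (f : R -> R) : Prop :=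
  exists M : R, forall x : R, 0 <= x -> `|f x| <= M.

Definition locally_bounded_on_nonneg (R : realType) (f : R -> R) : Prop :=
  forall b : R, exists M : R, forall x : R, 0 <= x -> x <= b -> `|f x| <= M.

(* F(x,t) and G(x,t) are both infima over y >= 0 of integrals int_0^y h(eta; x, t) deta.
   For (x, t) in a rectangle [0, X] x [0, T] the integrand is nonnegative beyond a
   threshold K (K = X + T sup|u0| for F, since eta eventually dominates t u0(eta) - x;
   K = T for G, since there t - eta <= 0 while ub > 0), so only y in [0, K] matter.
   On [0, K] the integrand is Lipschitz in (x, t) uniformly in eta, with constant
   (sup|u| + 1) times a bound on rho (times ub for G); hence the truncated integrals,
   and with them their infimum, are Lipschitz with K times that constant. *)

From mathcomp Require Import all_boot all_order all_algebra.
From mathcomp Require Import all_classical all_reals all_analysis.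
From mathcomp Require Import measurable_realfun ring lra.
Import Order.TTheory GRing.Theory Num.Theory.
Set Implicit Arguments. Unset Strict Implicit. Unset Printing Implicit Defensive.
Local Open Scope classical_set_scope.
Local Open Scope ring_scope.

Section LocallyBounded.
Variable R : realType.
Implicit Types f g : R -> R.

Lemma bounded_locally_bounded_on_nonneg f :
  bounded_on_nonneg f -> locally_bounded_on_nonneg f.
Proof. by move=> [M fM] b; exists M => x x0 _; exact: fM. Qed.

Lemma locally_bounded_on_nonneg_cst (c : R) :
  locally_bounded_on_nonneg (fun=> c).
Proof. by move=> b; exists `|c|. Qed.

Lemma locally_bounded_on_nonneg_id : locally_bounded_on_nonneg (@id R).
Proof.
by move=> b; exists `|b| => x x0 xb; rewrite ger0_norm // (le_trans xb) ?ler_norm.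
Qed.

Lemma locally_bounded_on_nonnegD f g :
  locally_bounded_on_nonneg f -> locally_bounded_on_nonneg g ->
  locally_bounded_on_nonneg (f \+ g).
Proof.
move=> lf lg b; have [M fM] := lf b; have [N gN] := lg b.
by exists (M + N) => x x0 xb; rewrite (le_trans (ler_normD _ _)) ?lerD ?fM ?gN.
Qed.

Lemma locally_bounded_on_nonnegB f g :
  locally_bounded_on_nonneg f -> locally_bounded_on_nonneg g ->
  locally_bounded_on_nonneg (f \- g).
Proof.
move=> lf lg b; have [M fM] := lf b; have [N gN] := lg b.
by exists (M + N) => x x0 xb; rewrite (le_trans (ler_normB _ _)) ?lerD ?fM ?gN.
Qed.

Lemma locally_bounded_on_nonnegM f g :
  locally_bounded_on_nonneg f -> locally_bounded_on_nonneg g ->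
  locally_bounded_on_nonneg (f \* g).
Proof.
move=> lf lg b; have [M fM] := lf b; have [N gN] := lg b.
by exists (M * N) => x x0 xb; rewrite normrM ler_pM ?fM ?gN.
Qed.

End LocallyBounded.

Section IntegralOnItv0.
Variable R : realType.
Local Notation mu := (@lebesgue_measure R).
Implicit Types (f : R -> R) (a B K y : R).

Lemma integrable_itv0 f a B : measurable_fun (`[0, +oo[ : set R) f ->
  (forall e, 0 <= e -> e <= a -> `|f e| <= B) ->
  mu.-integrable `[0, a] (EFin \o f).
Proof.
move=> mf fB; apply: measurable_bounded_integrable => //.
- by rewrite /= lebesgue_measure_itv; case: ifP => _ //; rewrite ltry.
- by apply: measurable_funS mf => // z /=; rewrite !in_itv /= => /andP[->].
exists B; split; first exact: num_real.
move=> M BM x; rewrite /= in_itv /= => /andP[x0 xa].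
by rewrite (le_trans (fB _ x0 xa)) // ltW.
Qed.

Lemma locally_bounded_integrable_itv0 f a : measurable_fun (`[0, +oo[ : set R) f ->
  locally_bounded_on_nonneg f -> mu.-integrable `[0, a] (EFin \o f).
Proof. by move=> mf /(_ a)[B fB]; exact: integrable_itv0 fB. Qed.

Lemma norm_int0_le f a B : 0 <= a -> measurable_fun (`[0, +oo[ : set R) f ->
  (forall e, 0 <= e -> e <= a -> `|f e| <= B) -> `|int0 a f| <= a * B.
Proof.
move=> a0 mf fB; have fi := integrable_itv0 mf fB.
have Bi : mu.-integrable `[0, a] (EFin \o cst B).
  by apply: (@integrable_itv0 _ _ `|B|) => //; exact: measurable_cst.
apply: le_trans (le_normr_Rintegral _ fi) _ => //.
apply: (@le_trans _ _ (Rintegral mu `[0, a] (cst B))).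
  apply: le_Rintegral => //; first exact: integrable_norm.
  by move=> x; rewrite /= in_itv /= => /andP[x0 xa]; exact: fB.
rewrite Rintegral_cst // /= lebesgue_measure_itv /= lte_fin.
have [a_gt0|] := ltP 0 a; first by rewrite /= subr0 mulrC.
by move=> a_le0; rewrite (@le_anti _ _ a 0) ?a_le0 // mul0r mulr0.
Qed.

Lemma int0_le_int0 f K y : 0 <= K -> K <= y -> measurable_fun (`[0, +oo[ : set R) f ->
  locally_bounded_on_nonneg f -> (forall e, K <= e -> 0 <= f e) ->
  int0 K f <= int0 y f.
Proof.
move=> K0 Ky mf lf f_ge0; rewrite -subr_ge0 /int0 Rintegral_itvB //.
- by apply: Rintegral_ge0 => x; rewrite /= in_itv /= => /andP[/ltW /f_ge0].
exact: locally_bounded_integrable_itv0.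
Qed.

End IntegralOnItv0.

Definition tail_nonneg_integrand (R : realType) (K : R) (f : R -> R) : Prop :=
  [/\ measurable_fun (`[0, +oo[ : set R) f, locally_bounded_on_nonneg f
    & forall e, K <= e -> 0 <= f e].

Definition inf_int0 (R : realType) (f : R -> R) : R :=
  inf [set int0 y f | y in `[0, +oo[].

Section InfIntegral.
Variables (R : realType) (K : R).
Hypothesis K0 : 0 <= K.
Implicit Types (f g : R -> R) (c y : R).

Lemma int0_min_le f y : tail_nonneg_integrand K f -> 0 <= y ->
  int0 (Num.min y K) f <= int0 y f.
Proof.
move=> [mf lf f_ge0] y0; have [//|/ltW Ky] := leP y K.
exact: int0_le_int0.
Qed.

Lemma inf_int0_lbound f : tail_nonneg_integrand K f ->
  has_lbound [set int0 y f | y in `[0, +oo[].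
Proof.
move=> fK; have [mf /(_ K)[B fB] _] := fK.
have B0 : 0 <= B by apply: le_trans (fB 0 (lexx _) K0).
exists (- (K * B)) => z [y]; rewrite /= in_itv /= andbT => y0 <-.
have m0 : 0 <= Num.min y K by rewrite le_min y0.
have mK : Num.min y K <= K by rewrite ge_min lexx orbT.
apply: le_trans (int0_min_le fK y0).
have := norm_int0_le m0 mf (fun e e0 em => fB e e0 (le_trans em mK)).
rewrite ler_norml => /andP[+ _]; apply: le_trans.
by rewrite lerN2 ler_wpM2r.
Qed.

Lemma inf_int0_le_int0 f y : tail_nonneg_integrand K f -> 0 <= y ->
  inf_int0 f <= int0 y f.
Proof.
move=> fK y0; apply: (ge_inf (inf_int0_lbound fK)).
by exists y => //=; rewrite in_itv /= y0.
Qed.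

Section TwoIntegrands.
Variables (f g : R -> R) (c : R).
Hypotheses (fK : tail_nonneg_integrand K f) (gK : tail_nonneg_integrand K g).
Hypothesis fg_near : forall e, 0 <= e -> e <= K -> `|f e - g e| <= c.

Lemma inf_int0_le : inf_int0 f <= inf_int0 g + K * c.
Proof.
have [mf lf _] := fK; have [mg lg _] := gK.
have c0 : 0 <= c := le_trans (normr_ge0 _) (fg_near (lexx 0) K0).
rewrite -lerBlDr; apply: lb_le_inf.
  by exists (int0 0 g), 0 => //=; rewrite in_itv /= lexx.
move=> z [y]; rewrite /= in_itv /= andbT => y0 <-; rewrite lerBlDr.
set m := Num.min y K.
have m0 : 0 <= m by rewrite le_min y0.
have mK : m <= K by rewrite ge_min lexx orbT.
have int0_fg : int0 m f - int0 m g <= K * c.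
  rewrite /int0 -RintegralB //; try exact: locally_bounded_integrable_itv0.
  have := norm_int0_le m0 (measurable_funB mf mg)
    (fun e e0 em => fg_near e0 (le_trans em mK)).
  by move=> /(le_trans (ler_norm _)) /le_trans; apply; rewrite ler_wpM2r.
apply: le_trans (inf_int0_le_int0 fK m0) _.
apply: le_trans (_ : int0 m g + K * c <= _); first by rewrite addrC -lerBlDr.
by rewrite lerD2r int0_min_le.
Qed.

End TwoIntegrands.

Lemma inf_int0_lipschitz f g c :
  tail_nonneg_integrand K f -> tail_nonneg_integrand K g ->
  (forall e, 0 <= e -> e <= K -> `|f e - g e| <= c) ->
  `|inf_int0 f - inf_int0 g| <= K * c.
Proof.
move=> fK gK fg_near; have := inf_int0_le fK gK fg_near.
have gf_near e : 0 <= e -> e <= K -> `|g e - f e| <= c.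
  by move=> e0 eK; rewrite distrC fg_near.
have := inf_int0_le gK fK gf_near.
by rewrite ler_norml => ? ?; apply/andP; split; lra.
Qed.

End InfIntegral.

Definition lipschitz_on_rect (R : realType) (f : R -> R -> R) (X T L : R) : Prop :=
  forall x t x' t', 0 <= x <= X -> 0 <= t <= T -> 0 <= x' <= X -> 0 <= t' <= T ->
  `|f x t - f x' t'| <= L * (`|x - x'| + `|t - t'|).

Lemma locally_lipschitz_quadrant_rect (R : realType) (f : R -> R -> R) :
  (forall X T, 0 <= X -> 0 <= T -> exists2 L, 0 <= L & lipschitz_on_rect f X T L) ->
  locally_lipschitz_quadrant f.
Proof.
move=> f_rect x0 t0 x00 t00.
have [L L0 fL] := f_rect (x0 + 1) (t0 + 1) (addr_ge0 x00 ler01) (addr_ge0 t00 ler01).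
exists 1; split=> //; exists L; split=> // x t x' t' x_ge0 t_ge0 x'_ge0 t'_ge0.
have near_le (z z0 : R) : `|z - z0| < 1 -> z <= z0 + 1.
  by rewrite ltr_distl => /andP[_ /ltW].
by move=> /near_le xX /near_le tT /near_le x'X /near_le t'T; apply: fL;
  apply/andP.
Qed.

Lemma norm_affine_mul_le (R : realDomainType) (a b u p M P : R) :
  `|u| <= M -> `|p| <= P -> `|(a + b * u) * p| <= (M + 1) * P * (`|a| + `|b|).
Proof.
move=> uM pP; have M0 := le_trans (normr_ge0 _) uM.
have P0 := le_trans (normr_ge0 _) pP.
have abu : `|a + b * u| <= `|a| + `|b| * M.
  by rewrite (le_trans (ler_normD _ _)) // lerD2l normrM ler_wpM2l.
rewrite normrM (le_trans (ler_pM _ _ abu pP)) //.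
have := mulr_ge0 (mulr_ge0 M0 P0) (normr_ge0 a); have := mulr_ge0 P0 (normr_ge0 b).
lra.
Qed.

Section FLipschitz.
Variables (R : realType) (u0 rho0 : R -> R) (M : R).
Hypotheses (mu0 : measurable_fun (`[0, +oo[ : set R) u0)
  (u0M : forall e, 0 <= e -> `|u0 e| <= M)
  (mrho0 : measurable_fun (`[0, +oo[ : set R) rho0)
  (lbrho0 : locally_bounded_on_nonneg rho0)
  (rho0_pos : forall e, 0 <= e -> 0 < rho0 e).

Lemma F_integrand_tail_nonneg X T x t : 0 <= x <= X -> 0 <= t <= T ->
  tail_nonneg_integrand (X + T * M)
    (fun eta => (t * u0 eta + eta - x) * rho0 eta).
Proof.
move=> /andP[x0 xX] /andP[t0 tT]; split.
- apply: measurable_funM _ mrho0; apply: measurable_funB _ (measurable_cst _).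
  by apply: measurable_funD => //; exact: measurable_funM (measurable_cst _) mu0.
- apply: locally_bounded_on_nonnegM lbrho0.
  apply: locally_bounded_on_nonnegB (locally_bounded_on_nonneg_cst _).
  apply: locally_bounded_on_nonnegD; last exact: locally_bounded_on_nonneg_id.
  apply: locally_bounded_on_nonnegM (locally_bounded_on_nonneg_cst _) _.
  by apply: bounded_locally_bounded_on_nonneg; exists M.
move=> e Ke; have M0 := le_trans (normr_ge0 _) (u0M (lexx 0)).
have e0 : 0 <= e.
  by apply: le_trans _ Ke; rewrite addr_ge0 ?mulr_ge0 ?(le_trans x0 xX) ?(le_trans t0 tT).
apply: mulr_ge0; last exact/ltW/rho0_pos.
have : `|t * u0 e| <= T * M by rewrite normrM ger0_norm // ler_pM ?u0M.
rewrite ler_norml => /andP[tu0 _]; lra.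
Qed.

Lemma Fxt_lipschitz_on_rect X T : 0 <= X -> 0 <= T ->
  exists2 L, 0 <= L & lipschitz_on_rect (Fxt u0 rho0) X T L.
Proof.
move=> X0 T0; have M0 := le_trans (normr_ge0 _) (u0M (lexx 0)).
have K0 : 0 <= X + T * M by rewrite addr_ge0 ?mulr_ge0.
have [P rho0P] := lbrho0 (X + T * M).
have P0 := le_trans (normr_ge0 _) (rho0P 0 (lexx 0) K0).
exists ((X + T * M) * ((M + 1) * P)); first by rewrite !mulr_ge0 // addr_ge0.
move=> x t x' t' xX tT x'X t'T; rewrite -mulrA.
apply: (inf_int0_lipschitz K0 (F_integrand_tail_nonneg xX tT)
  (F_integrand_tail_nonneg x'X t'T)) => e e0 eK.
rewrite (_ : _ - _ = ((x' - x) + (t - t') * u0 e) * rho0 e); last by ring.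
by rewrite (distrC x); exact: norm_affine_mul_le (u0M e0) (rho0P e e0 eK).
Qed.

End FLipschitz.

Section GLipschitz.
Variables (R : realType) (ub rhob : R -> R) (M : R).
Hypotheses (mub : measurable_fun (`[0, +oo[ : set R) ub)
  (ubM : forall e, 0 <= e -> `|ub e| <= M)
  (ub_pos : forall e, 0 <= e -> 0 < ub e)
  (mrhob : measurable_fun (`[0, +oo[ : set R) rhob)
  (lbrhob : locally_bounded_on_nonneg rhob)
  (rhob_pos : forall e, 0 <= e -> 0 < rhob e).

Lemma G_integrand_tail_nonneg T x t : 0 <= x -> t <= T -> 0 <= T ->
  tail_nonneg_integrand T
    (fun eta => (x - ub eta * (t - eta)) * rhob eta * ub eta).
Proof.
move=> x0 tT T0; have lbub : locally_bounded_on_nonneg ub.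
  by apply: bounded_locally_bounded_on_nonneg; exists M.
split.
- apply: measurable_funM _ mub; apply: measurable_funM _ mrhob.
  apply: measurable_funB => //; apply: measurable_funM mub _.
  exact: measurable_funB.
- apply: (locally_bounded_on_nonnegM (locally_bounded_on_nonnegM _ lbrhob) lbub).
  apply: locally_bounded_on_nonnegB (locally_bounded_on_nonneg_cst _) _.
  apply: (locally_bounded_on_nonnegM lbub).
  apply: locally_bounded_on_nonnegB; last exact: locally_bounded_on_nonneg_id.
  exact: locally_bounded_on_nonneg_cst.
move=> e Te; have e0 := le_trans T0 Te; have ub_e := ltW (ub_pos e0).
apply: (mulr_ge0 _ ub_e); apply: mulr_ge0 (ltW (rhob_pos e0)).
rewrite subr_ge0 (le_trans _ x0) //; apply: (mulr_ge0_le0 ub_e).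
by rewrite subr_le0 (le_trans tT).
Qed.

Lemma Gxt_lipschitz_on_rect X T : 0 <= T ->
  exists2 L, 0 <= L & lipschitz_on_rect (Gxt ub rhob) X T L.
Proof.
move=> T0; have M0 := le_trans (normr_ge0 _) (ubM (lexx 0)).
have [P rhobP] := lbrhob T.
have P0 := le_trans (normr_ge0 _) (rhobP 0 (lexx 0) T0).
exists (T * ((M + 1) * (P * M))); first by rewrite !mulr_ge0 ?addr_ge0.
move=> x t x' t' /andP[x0 _] /andP[_ tT] /andP[x'0 _] /andP[_ t'T]; rewrite -mulrA.
apply: (inf_int0_lipschitz T0 (G_integrand_tail_nonneg x0 tT T0)
  (G_integrand_tail_nonneg x'0 t'T T0)) => e e0 eT.
rewrite (_ : _ - _ = ((x - x') + (t' - t) * ub e) * (rhob e * ub e)); last by ring.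
rewrite (distrC t); apply: norm_affine_mul_le (ubM e0) _.
by rewrite normrM ler_pM ?rhobP ?ubM.
Qed.

End GLipschitz.

Theorem lemma2p5 (R : realType) (u0 ub rho0 rhob : R -> R)
  (mu0 : measurable_fun (`[0, +oo[ : set R) u0) (bu0 : bounded_on_nonneg u0)
  (mub : measurable_fun (`[0, +oo[ : set R) ub) (bub : bounded_on_nonneg ub)
  (ub_pos : forall x : R, 0 <= x -> 0 < ub x)
  (mrho0 : measurable_fun (`[0, +oo[ : set R) rho0) (lbrho0 : locally_bounded_on_nonneg rho0)
  (rho0_pos : forall x : R, 0 <= x -> 0 < rho0 x)
  (mrhob : measurable_fun (`[0, +oo[ : set R) rhob) (lbrhob : locally_bounded_on_nonneg rhob)
  (rhob_pos : forall x : R, 0 <= x -> 0 < rhob x) :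
  locally_lipschitz_quadrant (Fxt u0 rho0) /\
  locally_lipschitz_quadrant (Gxt ub rhob).
Proof.
have [M0 u0M] := bu0; have [Mb ubM] := bub.
split; apply: locally_lipschitz_quadrant_rect => X T X0 T0.
- exact: (Fxt_lipschitz_on_rect mu0 u0M mrho0 lbrho0 rho0_pos X0 T0).
- exact: (Gxt_lipschitz_on_rect mub ubM ub_pos mrhob lbrhob rhob_pos X T0).
Qed.
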